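(* Let $A\subseteq\mathbb{N}$ be infinite and coinfinite and let $Q=\{A\}$, a quantifier of type $\langle 1\rangle$ (note $Q=Q_A\cap Q^A$). Then $\mathrm{Aut}(Q)=\{g\in S_\infty: g(A)=A\}$, and every subset of $\mathbb{N}$ defined by an $\mathscr{L}_{\omega_1\omega}(Q)$-formula $\varphi(x,c_0,\dots,c_{t})$ with parameters $c_i\in\{0,\dots,t\}$ is either a subset of $\{0,\dots,t\}$ or contains $\mathbb{N}\setminus\{0,\dots,t\}$. In particular the orbits of $\mathrm{Aut}(Q)$ (e.g. the set $A$, which is the orbit of any element of $A$) are not all definable in $\mathscr{L}_{\omega_1\omega}(Q)$.
   Context: A quantifier of type $\langle k\rangle$ on $\mathbb{N}$ is a family of subsets of $\mathbb{N}^k$. For $A\subseteq\mathbb{N}^k$, $Q_A=\{X\subseteq\mathbb{N}^k:A\subseteq X\}$ and $Q^A=\{X\subseteq\mathbb{N}^k:X\subseteq A\}$. A permutation $f$ of $\mathbb{N}$ fixes $Q$ if $B\in Q\iff f(B)\in Q$ for all $B$; $\mathrm{Aut}(Q)$ is the group of such permutations. $\mathscr{L}_{\omega_1\omega}(Q)$ extends $\mathscr{L}_{\omega_1\omega}$ (countable conjunctions/disjunctions, finite quantifier strings) by formulas $Qx\,\varphi(x,y)$ with $\mathbb{N}\models Qx\,\varphi(x,b)$ iff $\{a:\mathbb{N}\models\varphi(a,b)\}\in Q$; formulas have no non-logical symbols besides $Q$. A set $B\subseteq\mathbb{N}^n$ is definable in $\mathscr{L}_{\omega_1\omega}(Q)$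 if there is a parameter-free formula $\varphi(x_1,\ldots,x_n)$ with $b\in B\iff\mathbb{N}\models\varphi(b)$. *)

From Stdlib Require Import Arith List.
Import ListNotations.

Definition finite_set (B : nat -> Prop) : Prop :=
  exists l : list nat, forall n, B n -> In n l.
Definition infinite_set (B : nat -> Prop) : Prop := ~ finite_set B.
Definition coinfinite_set (B : nat -> Prop) : Prop :=
  infinite_set (fun n => ~ B n).

Definition quantifier1 := (nat -> Prop) -> Prop.

(* Q_A = {X : A ⊆ X},  Q^A = {X : X ⊆ A},  {A} = {X : X = A} (extensional) *)
Definition Q_lower (A : nat -> Prop) : quantifier1 :=
  fun X => forall n, A n -> X n.
Definition Q_upper (A : nat -> Prop) : quantifier1 :=
  fun X => forall n, X n -> A n.
Definition Q_single (A : nat -> Prop) : quantifier1 :=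
  fun X => forall n, X n <-> A n.

Definition bijective_nat (g : nat -> nat) : Prop :=
  (forall x y, g x = g y -> x = y) /\ (forall y, exists x, g x = y).
Definition image (g : nat -> nat) (B : nat -> Prop) : nat -> Prop :=
  fun y => exists x, B x /\ g x = y.
Definition fixes (Q : quantifier1) (g : nat -> nat) : Prop :=
  forall B : nat -> Prop, Q B <-> Q (image g B).
Definition Aut (Q : quantifier1) (g : nat -> nat) : Prop :=
  bijective_nat g /\ fixes Q g.

(* Syntax of L_{omega_1 omega}(Q): variables are natural numbers, the only
   atomic formulas are equalities, countable conjunctions/disjunctions are
   indexed by nat (finite ones by repetition). *)
Inductive formula : Type :=
| FEq : nat -> nat -> formula
| FNot : formula -> formula
| FAnd : (nat -> formula) -> formula
| FOr : (nat -> formula) -> formula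
| FExists : nat -> formula -> formula
| FForall : nat -> formula -> formula
| FQ : nat -> formula -> formula.

Definition update (rho : nat -> nat) (x a : nat) : nat -> nat :=
  fun y => if Nat.eqb y x then a else rho y.

Fixpoint sat (Q : quantifier1) (rho : nat -> nat) (phi : formula) : Prop :=
  match phi with
  | FEq i j => rho i = rho j
  | FNot p => ~ sat Q rho p
  | FAnd ps => forall k, sat Q rho (ps k)
  | FOr ps => exists k, sat Q rho (ps k)
  | FExists x p => exists a, sat Q (update rho x a) p
  | FForall x p => forall a, sat Q (update rho x a) p
  | FQ x p => Q (fun a => sat Q (update rho x a) p)
  end.

(* B ⊆ N is definable (parameter-free) by phi with free variable x:
   the truth of phi depends only on the value of x, and equals membership in B. *)
Definition definable (Q : quantifier1) (B : nat -> Prop) : Prop :=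
  exists (phi : formula) (x : nat), forall rho, sat Q rho phi <-> B (rho x).

(* Under an assignment with bounded values, truth of a formula is invariant
   under every transposition of N: transpositions fix the structure (N, =)
   and, applied above the bound, the set quantified over by [Q x p].  Hence a
   set defined with parameters below [t] is invariant under transpositions of
   elements above [t], so it is either contained in [{0..t}] or contains
   everything above [t].  Such a set is finite or cofinite, never the infinite
   coinfinite set [A]; so every [Q]-subformula is false, which closes the
   induction, and [A] itself is not definable. *)
From Stdlib Require Import Arith List Lia Classical FunctionalExtensionality.

Definition transp (u v n : nat) : nat :=
  if Nat.eqb n u then v else if Nat.eqb n v then u else n.

Lemma transpK u v n : transp u v (transp u v n) = n.
Proof.
  unfold transp.
  destruct (Nat.eqb_spec n u) as [->|Hu].
  - destruct (Nat.eqb_spec v u) as [->|_]; [reflexivity|].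
    now rewrite Nat.eqb_refl.
  - destruct (Nat.eqb_spec n v) as [->|Hv].
    + now rewrite Nat.eqb_refl.
    + apply Nat.eqb_neq in Hu, Hv. now rewrite Hu, Hv.
Qed.

Lemma transp_l u v : transp u v u = v.
Proof. unfold transp. now rewrite Nat.eqb_refl. Qed.

Lemma transp_other u v n : n <> u -> n <> v -> transp u v n = n.
Proof. intros. unfold transp. destruct (Nat.eqb_spec n u), (Nat.eqb_spec n v); lia. Qed.

Lemma transp_le u v n : transp u v n <= max n (max u v).
Proof. unfold transp. destruct (Nat.eqb_spec n u), (Nat.eqb_spec n v); lia. Qed.

Lemma transp_bijective u v : bijective_nat (transp u v).
Proof.
  split.
  - intros x y E. now rewrite <- (transpK u v x), E, transpK.
  - intro y. exists (transp u v y). apply transpK.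
Qed.

Lemma transp_update u v rho y a :
  (fun w => transp u v (update rho y a w))
  = update (fun w => transp u v (rho w)) y (transp u v a).
Proof.
  apply functional_extensionality; intro w. unfold update. now destruct (Nat.eqb w y).
Qed.

Lemma update_transp_above rho x t a b :
  (forall w, w <> x -> rho w <= t) -> t < a -> t < b ->
  update rho x b = (fun w => transp a b (update rho x a w)).
Proof.
  intros Hrho Ha Hb. apply functional_extensionality; intro w. unfold update.
  destruct (Nat.eqb_spec w x) as [_|Hw].
  - now rewrite transp_l.
  - specialize (Hrho w Hw). rewrite transp_other; lia.
Qed.

Definition bounded (rho : nat -> nat) (N : nat) : Prop := forall w, rho w <= N.

Lemma bounded_update rho N y a : bounded rho N -> bounded (update rho y a) (max N a).
Proof.
  intros H w. unfold update. destruct (Nat.eqb w y); [lia | specialize (H w); lia].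
Qed.

Lemma bounded_transp rho N u v :
  bounded rho N -> bounded (fun w => transp u v (rho w)) (max N (max u v)).
Proof. intros H w. pose proof (transp_le u v (rho w)). specialize (H w). lia. Qed.

Definition tail_homogeneous (t : nat) (D : nat -> Prop) : Prop :=
  forall a b, t < a -> t < b -> D a -> D b.

Definition small_or_large (t : nat) (D : nat -> Prop) : Prop :=
  (forall a, D a -> a <= t) \/ (forall a, t < a -> D a).

Lemma tail_homogeneous_small_or_large t D :
  tail_homogeneous t D -> small_or_large t D.
Proof.
  intros HD. destruct (classic (D (S t))) as [H|H].
  - right. intros a Ha. apply (HD (S t)); auto; lia.
  - left. intros a Ha. destruct (le_gt_dec a t) as [|Hlt]; auto.
    exfalso. apply H, (HD a); auto; lia.
Qed.

Lemma finite_of_bounded (D : nat -> Prop) t : (forall n, D n -> n <= t) -> finite_set D.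
Proof.
  intros H. exists (seq 0 (S t)). intros n Hn. apply in_seq. specialize (H n Hn). lia.
Qed.

Section InfiniteCoinfinite.

Variable A : nat -> Prop.
Hypothesis hinf : infinite_set A.
Hypothesis hcoinf : coinfinite_set A.

Lemma small_or_large_not_single t D : small_or_large t D -> ~ Q_single A D.
Proof.
  intros [Hsmall|Hlarge] HA.
  - apply hinf, (finite_of_bounded _ t). intros n Hn. now apply Hsmall, HA.
  - apply hcoinf, (finite_of_bounded _ t). intros n Hn.
    destruct (le_gt_dec n t) as [|Hlt]; auto.
    exfalso. now apply Hn, HA, Hlarge.
Qed.

Definition transp_invariant (phi : formula) : Prop :=
  forall rho N, bounded rho N -> forall u v,
    sat (Q_single A) rho phi <-> sat (Q_single A) (fun w => transp u v (rho w)) phi.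

Lemma defined_set_tail_homogeneous phi x t rho :
  transp_invariant phi -> (forall w, w <> x -> rho w <= t) ->
  tail_homogeneous t (fun a => sat (Q_single A) (update rho x a) phi).
Proof.
  intros Hphi Hrho a b Ha Hb Da.
  rewrite (update_transp_above rho x t a b Hrho Ha Hb).
  assert (Hbd : bounded (update rho x a) (max t a)).
  { intro w. unfold update. destruct (Nat.eqb_spec w x) as [|Hw]; [lia|].
    specialize (Hrho w Hw). lia. }
  now apply (Hphi _ _ Hbd).
Qed.

Lemma Q_formula_false_bounded y p rho N :
  transp_invariant p -> bounded rho N -> ~ sat (Q_single A) rho (FQ y p).
Proof.
  intros Hp Hrho. apply (small_or_large_not_single N), tail_homogeneous_small_or_large.
  apply defined_set_tail_homogeneous; auto.
Qed.

Lemma sat_transp phi : transp_invariant phi.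
Proof.
  induction phi as [i j|p IH|ps IH|ps IH|y p IH|y p IH|y p IH];
    intros rho N HN u v; simpl.
  - split; intro E; [now rewrite E|].
    now rewrite <- (transpK u v (rho i)), <- (transpK u v (rho j)), E.
  - now rewrite (IH rho N HN u v).
  - split; intros H k; specialize (H k); now apply (IH k rho N HN u v) in H.
  - split; intros [k H]; exists k; now apply (IH k rho N HN u v) in H.
  - split; intros [a H]; exists (transp u v a).
    + rewrite <- transp_update. now apply (IH _ _ (bounded_update rho N y a HN)).
    + apply (IH _ _ (bounded_update rho N y _ HN) u v).
      now rewrite transp_update, transpK.
  - split; intros H a.
    + rewrite <- (transpK u v a), <- transp_update.
      now apply (IH _ _ (bounded_update rho N y _ HN)).
    + apply (IH _ _ (bounded_update rho N y a HN) u v). rewrite transp_update. apply H.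
  - split; intro H; exfalso.
    + exact (Q_formula_false_bounded y p rho N IH HN H).
    + exact (Q_formula_false_bounded y p _ _ IH (bounded_transp rho N u v HN) H).
Qed.

Lemma defined_set_small_or_large phi x t rho :
  (forall w, w <> x -> rho w <= t) ->
  small_or_large t (fun a => sat (Q_single A) (update rho x a) phi).
Proof.
  intros Hrho. apply tail_homogeneous_small_or_large,
    defined_set_tail_homogeneous; [apply sat_transp | exact Hrho].
Qed.

Lemma not_definable_single : ~ definable (Q_single A) A.
Proof.
  intros [phi [x Hdef]].
  apply (small_or_large_not_single 0 (fun a => sat (Q_single A) (update (fun _ => 0) x a) phi)).
  - apply defined_set_small_or_large. auto.
  - intro a. rewrite (Hdef _). unfold update. now rewrite Nat.eqb_refl.
Qed.

End InfiniteCoinfinite.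

Lemma fixes_single_iff (A : nat -> Prop) g : bijective_nat g ->
  fixes (Q_single A) g <-> (forall y, image g A y <-> A y).
Proof.
  intros [Hinj _]. split.
  - intros Hfix. apply (Hfix A). intro n; tauto.
  - intros HgA B. split.
    + intros HB y. rewrite <- HgA. split; intros [z [Hz E]]; exists z; split; auto; now apply HB.
    + intros HB n. split; intro Hn.
      * assert (I : image g B (g n)) by (exists n; auto).
        apply HB, HgA in I. destruct I as [z [Hz E]]. apply Hinj in E. now subst.
      * assert (I : image g A (g n)) by (exists n; auto).
        apply HgA, HB in I. destruct I as [z [Hz E]]. apply Hinj in E. now subst.
Qed.

Lemma Aut_single_orbit (A : nat -> Prop) a b : A a ->
  (exists g, Aut (Q_single A) g /\ g a = b) <-> A b.
Proof.
  intros Ha. split.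
  - intros [g [[Hbij Hfix] <-]]. apply (proj1 (fixes_single_iff A g Hbij) Hfix). now exists a.
  - intros Hb. exists (transp a b). split; [split|apply transp_l].
    + apply transp_bijective.
    + apply fixes_single_iff; [apply transp_bijective|]. intro y. split.
      * intros [z [Hz <-]]. unfold transp.
        destruct (Nat.eqb z a); [|destruct (Nat.eqb z b)]; auto.
      * intro Hy. exists (transp a b y). split; [|apply transpK].
        unfold transp. destruct (Nat.eqb y a); [|destruct (Nat.eqb y b)]; auto.
Qed.

Theorem mainTheorem11 (A : nat -> Prop)
  (hinf : infinite_set A) (hcoinf : coinfinite_set A) :
  (* Q = {A} = Q_A ∩ Q^A *)
  (forall X, Q_single A X <-> (Q_lower A X /\ Q_upper A X)) /\
  (* Aut(Q) = {g ∈ S_inf : g(A) = A} *)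
  (forall g, bijective_nat g ->
     (fixes (Q_single A) g <-> (forall y, image g A y <-> A y))) /\
  (* sets defined with parameters from {0,...,t} *)
  (forall (phi : formula) (x t : nat) (rho : nat -> nat),
     (forall w, w <> x -> rho w <= t) ->
     let B := fun a => sat (Q_single A) (update rho x a) phi in
     (forall a, B a -> a <= t) \/ (forall a, t < a -> B a)) /\
  (* A is an orbit of Aut(Q), yet not definable *)
  (forall a, A a -> forall b,
     (exists g, Aut (Q_single A) g /\ g a = b) <-> A b) /\
  ~ definable (Q_single A) A.
Proof.
  split; [|split; [|split; [|split]]].
  - intro X. unfold Q_single, Q_lower, Q_upper. firstorder.
  - apply fixes_single_iff.
  - intros phi x t rho Hrho. now apply defined_set_small_or_large.
  - intros a Ha b. now apply Aut_single_orbit.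
  - now apply not_definable_single.
Qed.
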